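(* Let $X\subseteq\mathbb{R}^{\mathbb{Z}_<}$, $f:X\to\mathbb{R}^{\mathbb{Z}_<}$ and $x_0\in X$. Then $f$ is $\iota$-continuous at $x_0$ if and only if for every sequence $(x_n)$ in $X$ with $\mathrm{HC}(x_n,x_0)$, the sequence $(f(x_n))$ satisfies $\mathrm{HC}(f(x_n),f(x_0))$.
   Context: $\mathbb{R}^{\mathbb{Z}_<}$ is the set of formal series $\sum_{i\ge -k}a_i\epsilon^i$ ($k\in\mathbb{N}\cup\{0\}$, $a_i\in\mathbb{R}$), with coefficientwise addition, Cauchy-product multiplication and lexicographic order; $|\cdot|$ is the associated absolute value. $f$ is $\iota$-continuous at $x_0$ means: for every positive $\iota_1\in\mathbb{R}^{\mathbb{Z}_<}$ there is a positive $\iota_2\in\mathbb{R}^{\mathbb{Z}_<}$ such that $x\in X$ and $|x-x_0|<\iota_2$ imply $|f(x)-f(x_0)|<\iota_1$. $\mathrm{HC}(s_n,s)$ (hyperconvergence) means: for every $r\in\mathbb{R}^{\mathbb{Z}_<}$ with $r>0$ there is $N$ such that $|s_n-s|<r$ for all $n>N$. *)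

(* the field R^{Z_<} of formal Laurent series with finitely many
   negative powers, sum_{i >= -k} a_i eps^i, a_i real. *)
From Stdlib Require Import Reals ZArith Lra Lia ClassicalDescription.
Open Scope R_scope.

Record LS : Type := mkLS {
  coef : Z -> R ;
  coef_lb : exists k : Z, forall i : Z, (i < k)%Z -> coef i = 0
}.

Definition LS_add (x y : LS) : LS.
Proof.
  refine (mkLS (fun i => coef x i + coef y i) _).
  destruct (coef_lb x) as [kx Hx]; destruct (coef_lb y) as [ky Hy].
  exists (Z.min kx ky); intros i Hi.
  rewrite Hx, Hy by lia; lra.
Defined.

Definition LS_opp (x : LS) : LS.
Proof.
  refine (mkLS (fun i => - coef x i) _).
  destruct (coef_lb x) as [kx Hx].
  exists kx; intros i Hi. rewrite Hx by lia; lra.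
Defined.

Definition LS_sub (x y : LS) : LS := LS_add x (LS_opp y).

Definition LS_pos (x : LS) : Prop :=
  exists k : Z, 0 < coef x k /\ forall i : Z, (i < k)%Z -> coef x i = 0.

Definition LS_lt (x y : LS) : Prop := LS_pos (LS_sub y x).

Definition LS_abs (x : LS) : LS :=
  if excluded_middle_informative (LS_pos (LS_opp x)) then LS_opp x else x.

(* iota-continuity of f : X -> R^{Z_<} at x0 (f is given as a total
   function; only its values on X matter). *)
Definition iota_continuous (X : LS -> Prop) (f : LS -> LS) (x0 : LS) : Prop :=
  forall iota1 : LS, LS_pos iota1 ->
    exists iota2 : LS, LS_pos iota2 /\
      forall x : LS, X x -> LS_lt (LS_abs (LS_sub x x0)) iota2 ->
        LS_lt (LS_abs (LS_sub (f x) (f x0))) iota1.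

Definition HC (s : nat -> LS) (l : LS) : Prop :=
  forall r : LS, LS_pos r ->
    exists N : nat, forall n : nat, (n > N)%nat ->
      LS_lt (LS_abs (LS_sub (s n) l)) r.

(* Sequential continuity implies ι-continuity by the usual contrapositive
   argument, with the monomials ε^n playing the role of 1/n: if f is not
   ι-continuous at x0, pick for each n a point x_n of X with |x_n - x0| < ε^n
   but |f(x_n) - f(x0)| not below some fixed ι1.  Every positive r has a lowest
   nonzero coefficient of some index k, so ε^n < r as soon as n > k; hence x_n
   hyperconverges to x0 while f(x_n) does not hyperconverge to f(x0). *)
From Stdlib Require Import Reals ZArith Lra Lia Classical ClassicalEpsilon.
Open Scope R_scope.

Lemma LS_pos_add (x y z : LS) :
  LS_pos x -> LS_pos y -> (forall i, coef z i = coef x i + coef y i) ->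
  LS_pos z.
Proof.
  intros [kx [Hkx Hx]] [ky [Hky Hy]] Hz.
  exists (Z.min kx ky); split.
  - rewrite Hz.
    destruct (Z.lt_total kx ky) as [Hlt | [-> | Hlt]].
    + rewrite Z.min_l, (Hy kx) by lia; lra.
    + rewrite Z.min_id; lra.
    + rewrite Z.min_r, (Hx ky) by lia; lra.
  - intros i Hi; rewrite Hz, Hx, Hy by lia; lra.
Qed.

Lemma LS_lt_trans (x y z : LS) : LS_lt x y -> LS_lt y z -> LS_lt x z.
Proof.
  intros Hxy Hyz; apply (LS_pos_add _ _ _ Hyz Hxy).
  intros i; simpl; lra.
Qed.

Definition eps_pow (n : Z) : LS.
Proof.
  refine (mkLS (fun i => if Z.eq_dec i n then 1 else 0) _).
  exists n; intros i Hi; destruct (Z.eq_dec i n); [lia | reflexivity].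
Defined.

Lemma eps_pow_pos (n : Z) : LS_pos (eps_pow n).
Proof.
  exists n; simpl; split.
  - destruct (Z.eq_dec n n); [lra | congruence].
  - intros i Hi; destruct (Z.eq_dec i n); [lia | reflexivity].
Qed.

Lemma eps_pow_lt_pos (r : LS) :
  LS_pos r -> exists k : Z, forall n, (k < n)%Z -> LS_lt (eps_pow n) r.
Proof.
  intros [k [Hk Hr]]; exists k; intros n Hn.
  exists k; simpl; split.
  - destruct (Z.eq_dec k n); [lia | lra].
  - intros i Hi; rewrite Hr by lia; destruct (Z.eq_dec i n); [lia | lra].
Qed.

Lemma HC_eps_pow_bound (s : nat -> LS) (l : LS) :
  (forall n, LS_lt (LS_abs (LS_sub (s n) l)) (eps_pow (Z.of_nat n))) -> HC s l.
Proof.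
  intros Hs r Hr.
  destruct (eps_pow_lt_pos r Hr) as [k Hk].
  exists (Z.to_nat k); intros n Hn.
  apply LS_lt_trans with (eps_pow (Z.of_nat n)); [apply Hs | apply Hk; lia].
Qed.

Lemma iota_continuous_HC (X : LS -> Prop) (f : LS -> LS) (x0 : LS)
    (s : nat -> LS) :
  iota_continuous X f x0 -> (forall n, X (s n)) -> HC s x0 ->
  HC (fun n => f (s n)) (f x0).
Proof.
  intros Hf HXs Hs r Hr.
  destruct (Hf r Hr) as [iota2 [Hiota2 Hcont]].
  destruct (Hs iota2 Hiota2) as [N HN].
  exists N; intros n Hn; apply Hcont; auto.
Qed.

Lemma not_iota_continuous_HC (X : LS -> Prop) (f : LS -> LS) (x0 : LS) :
  ~ iota_continuous X f x0 ->
  exists s : nat -> LS, (forall n, X (s n)) /\ HC s x0 /\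
    ~ HC (fun n => f (s n)) (f x0).
Proof.
  intros Hf.
  apply not_all_ex_not in Hf as [iota1 Hf].
  apply imply_to_and in Hf as [Hiota1 Hf].
  assert (Hbad : forall n : nat, exists x, X x /\
            LS_lt (LS_abs (LS_sub x x0)) (eps_pow (Z.of_nat n)) /\
            ~ LS_lt (LS_abs (LS_sub (f x) (f x0))) iota1).
  { intros n; apply NNPP; intros Hn; apply Hf.
    exists (eps_pow (Z.of_nat n)); split; [apply eps_pow_pos |].
    intros x HX Hx; apply NNPP; intros Hfx; apply Hn; exists x; auto. }
  destruct (choice _ Hbad) as [s Hs].
  exists s; split; [| split].
  - intros n; apply Hs.
  - apply HC_eps_pow_bound; intros n; apply Hs.
  - intros HCf; destruct (HCf iota1 Hiota1) as [N HN].
    apply (Hs (S N)), HN; lia.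
Qed.

Theorem mainTheorem16 (X : LS -> Prop) (f : LS -> LS) (x0 : LS) :
  X x0 ->
  (iota_continuous X f x0 <->
   forall s : nat -> LS, (forall n, X (s n)) -> HC s x0 ->
     HC (fun n => f (s n)) (f x0)).
Proof.
  intros _; split.
  - intros Hf s; apply iota_continuous_HC, Hf.
  - intros Hseq; apply NNPP; intros Hf.
    destruct (not_iota_continuous_HC X f x0 Hf) as [s [HXs [Hs Hfs]]].
    exact (Hfs (Hseq s HXs Hs)).
Qed.
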